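(* Let $N\in\mathbb N$ and let $z_1> \dots> z_N$ be the zeros of the classical Hermite polynomial $H_N$ (orthogonal with respect to the weight $e^{-x^2}$ on $\mathbb R$). Form the matrix $S=(s_{i,j})_{i,j=1,\dots,N}$ with $$s_{i,i}:=1+\sum_{l\ne i}(z_i-z_l)^{-2},\qquad s_{i,j}:=-(z_i-z_j)^{-2}\quad (i\ne j).$$ Then $\det S=N!$. *)

From HB Require Import structures.
From mathcomp Require Import all_boot all_order all_algebra.
From mathcomp Require Import reals.
Set Implicit Arguments. Unset Strict Implicit. Unset Printing Implicit Defensive.
Import Order.TTheory GRing.Theory Num.Theory.
Local Open Scope ring_scope.

(* Physicists' Hermite polynomials (orthogonal w.r.t. exp(-x^2)):
   H_0 = 1, H_1 = 2X, H_{n+2} = 2X H_{n+1} - 2(n+1) H_n.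
   hermite_pair n = (H_n, H_{n+1}). *)
Fixpoint hermite_pair (R : nzRingType) (n : nat) : {poly R} * {poly R} :=
  match n with
  | 0 => (1, 2%:R *: 'X)
  | n'.+1 => let: (a, b) := hermite_pair R n' in
             (b, 2%:R *: 'X * b - (2 * n'.+1)%:R *: a)
  end.

Definition hermite (R : nzRingType) (n : nat) : {poly R} := (hermite_pair R n).1.

Definition Smat (R : realType) (N : nat) (z : 'I_N -> R) : 'M[R]_N :=
  \matrix_(i < N, j < N)
    if i == j then 1 + \sum_(l < N | l != i) (z i - z l) ^- 2
    else - (z i - z j) ^- 2.

From HB Require Import structures.
From mathcomp Require Import all_boot all_order all_algebra.
From mathcomp Require Import reals.
From mathcomp Require Import ring.
Set Implicit Arguments. Unset Strict Implicit. Unset Printing Implicit Defensive.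
Import Order.TTheory GRing.Theory Num.Theory.
Local Open Scope ring_scope.

(* The zeros of H_N satisfy the Stieltjes relations
   sum_(l != i) 1 / (z_i - z_l) = z_i: for p = prod_l (X - z_l) one has
   p''(z_i) = 2 p'(z_i) sum_(l != i) 1 / (z_i - z_l), while the Hermite equation
   H'' = 2 X H' - 2 N H gives H''(z_i) = 2 z_i H'(z_i).  By these relations,
   sum_(l != i) (z_i^k - z_l^k) / (z_i - z_l)^2 = f_k(z_i) for a polynomial f_k
   of degree k and leading coefficient k that does not depend on i.  Hence
   S V = V (1 + F) with V = (z_i^k)_(i,k) an invertible Vandermonde matrix and
   F = (coefficients of f_k)_(m,k) strictly upper triangular, so
   det S = prod_(k < N) (1 + k) = N!. *)

Section HermiteTheory.
Variable R : comNzRingType.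

Lemma hermiteSS n :
  hermite R n.+2 = 2%:R *: 'X * hermite R n.+1 - (2 * n.+1)%:R *: hermite R n.
Proof. by rewrite /hermite /=; case: hermite_pair. Qed.

Lemma deriv_hermite_pair n :
  (hermite R n.+1)^`() = (2 * n.+1)%:R *: hermite R n /\
  (hermite R n)^`() = 2%:R *: 'X * hermite R n - hermite R n.+1.
Proof.
elim: n => [|n [dS d]].
  rewrite /hermite /= derivZ derivX derivC muln1 alg_polyC.
  by split; rewrite // mulr1 subrr.
split; last by rewrite hermiteSS dS opprB addrC subrK.
rewrite hermiteSS derivB derivM !derivZ derivX dS d.
rewrite -!mul_polyC !polyC_natr !natrM !mulrSr; ring.
Qed.

Lemma hermite_ode n :
  (hermite R n)^`()^`() = 2%:R *: 'X * (hermite R n)^`() - (2 * n)%:R *: hermite R n.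
Proof.
have [dS d] := deriv_hermite_pair n.
rewrite [in LHS]d derivB derivM !derivZ derivX dS d.
rewrite -!mul_polyC !polyC_natr !natrM !mulrSr; ring.
Qed.

Lemma size_coef_hermite n :
  (size (hermite R n) <= n.+1)%N /\ (hermite R n)`_n = 2%:R ^+ n.
Proof.
suff [] : ((size (hermite R n) <= n.+1)%N /\ (hermite R n)`_n = 2%:R ^+ n) /\
          ((size (hermite R n.+1) <= n.+2)%N /\ (hermite R n.+1)`_n.+1 = 2%:R ^+ n.+1)
  by [].
elim: n => [|n [[s0 _] [s1 c1]]].
  rewrite /hermite /= size_poly1 coef1 coefZ coefX mulr1; split=> //; split=> //.
  by apply: leq_trans (size_scale_leq _ _) _; rewrite size_polyX.
split=> //; rewrite hermiteSS -scalerAl; split.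
  apply: leq_trans (size_polyD _ _) _; rewrite geq_max size_polyN; apply/andP; split.
    apply: leq_trans (size_scale_leq _ _) _; apply: leq_trans (size_polyMleq _ _) _.
    by rewrite size_polyX.
  by apply: leq_trans (size_scale_leq _ _) (leq_trans s0 (leqW (leqnSn _))).
rewrite coefB !coefZ coefXM /= c1 (nth_default _ (leq_trans s0 (leqnSn _))).
by rewrite mulr0 subr0 -exprS.
Qed.

End HermiteTheory.

Lemma size_hermite (R : idomainType) n : 2%:R != 0 :> R -> size (hermite R n) = n.+1.
Proof.
move=> two_neq0; have [le_size lead] := size_coef_hermite R n.
apply/eqP; rewrite eqn_leq le_size /= ltnNge.
by apply: contraL (expf_neq0 n two_neq0) => /leq_sizeP/(_ n (leqnn n)) <-; rewrite lead eqxx.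
Qed.

Definition stieltjes_relation (R : fieldType) (I : finType) (z : I -> R) : Prop :=
  forall i, \sum_(l | l != i) (z i - z l)^-1 = z i.

Section ProductOfLinearFactors.
Variable R : fieldType.

Lemma horner_deriv_prod_XsubC (I : Type) (r : seq I) (P : pred I) (z : I -> R) a :
  (forall l, P l -> z l != a) ->
  (\prod_(l <- r | P l) ('X - (z l)%:P))^`().[a] =
    (\prod_(l <- r | P l) ('X - (z l)%:P)).[a] * \sum_(l <- r | P l) (a - z l)^-1.
Proof.
move=> z_neq_a; elim: r => [|x r IH]; first by rewrite !big_nil derivC !hornerC mulr0.
rewrite !big_cons; case: ifP => // Px.
have ax_neq0 : a - z x != 0 by rewrite subr_eq0 eq_sym z_neq_a.
rewrite derivM derivXsubC mul1r hornerD !hornerM hornerXsubC IH.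
by field.
Qed.

Variables (I : finType) (z : I -> R).
Hypothesis z_inj : injective z.

Let g i := \prod_(l | l != i) ('X - (z l)%:P).

Let prod_XsubC_split i : \prod_l ('X - (z l)%:P) = ('X - (z i)%:P) * g i.
Proof. exact: bigD1. Qed.

Let z_neq l i : l != i -> z l != z i.
Proof. by apply: contra => /eqP/z_inj->. Qed.

Lemma horner_deriv_prod_XsubC_root i :
  (\prod_l ('X - (z l)%:P))^`().[z i] = \prod_(l | l != i) (z i - z l).
Proof.
rewrite (prod_XsubC_split i) derivM derivXsubC mul1r hornerD hornerM hornerXsubC subrr mul0r.
by rewrite addr0 horner_prod; apply: eq_bigr => l _; rewrite hornerXsubC.
Qed.

Lemma horner_deriv2_prod_XsubC_root i :
  (\prod_l ('X - (z l)%:P))^`()^`().[z i] =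
    2 * (\prod_l ('X - (z l)%:P))^`().[z i] * \sum_(l | l != i) (z i - z l)^-1.
Proof.
have dg : (g i)^`().[z i] = (g i).[z i] * \sum_(l | l != i) (z i - z l)^-1.
  exact: horner_deriv_prod_XsubC (z_neq ^~ i).
rewrite (prod_XsubC_split i) derivM derivXsubC mul1r derivD derivM derivXsubC mul1r.
rewrite !hornerD !hornerM hornerXsubC subrr !mul0r !addr0 dg.
ring.
Qed.

End ProductOfLinearFactors.

Lemma hermite_roots_stieltjes (R : fieldType) N (z : 'I_N -> R) :
  2%:R != 0 :> R -> injective z -> (forall i, root (hermite R N) (z i)) ->
  stieltjes_relation z.
Proof.
move=> two_neq0 z_inj z_root i.
set H := hermite R N; set p := \prod_(l < N) ('X - (z l)%:P).
have H_prod : H = lead_coef H *: p.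
  rewrite {1}(@all_roots_prod_XsubC _ H (map z (enum 'I_N))).
  - by rewrite big_map big_enum.
  - by rewrite size_map size_enum_ord size_hermite.
  - by apply/allP => _ /mapP [l _ ->].
  - by rewrite uniq_rootsE (map_inj_uniq z_inj) enum_uniq.
have lead_neq0 : lead_coef H != 0.
  by rewrite lead_coef_eq0 -size_poly_eq0 size_hermite.
have dp_neq0 : p^`().[z i] != 0.
  rewrite horner_deriv_prod_XsubC_root; apply/prodf_neq0 => l li.
  by rewrite subr_eq0 eq_sym; apply: contra li => /eqP/z_inj->.
have := congr1 (horner^~ (z i)) (hermite_ode R N).
rewrite -/H !hornerE (rootP (z_root i)) mulr0 subr0 H_prod !derivZ !hornerZ.
rewrite horner_deriv2_prod_XsubC_root // -/p => eq_ode.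
have c2dp_neq0 : lead_coef H * 2 * p^`().[z i] != 0 by rewrite !mulf_neq0.
apply: (mulfI c2dp_neq0); set S := \sum_(l | l != i) _ in eq_ode *.
by transitivity (lead_coef H * (2 * p^`().[z i] * S)); [ring | rewrite eq_ode; ring].
Qed.

Section CauchySums.
Variables (R : fieldType) (I : finType) (z : I -> R).

Definition power_sum k := \sum_l z l ^+ k.

(* The recursions come from z_l^(k+1) = z_i z_l^k - z_l^k (z_i - z_l) and
   z_i^(k+1) - z_l^(k+1) = z_i (z_i^k - z_l^k) + z_l^k (z_i - z_l),
   and the base case of cauchy_poly is the Stieltjes relation. *)
Fixpoint cauchy_poly k : {poly R} :=
  if k is k'.+1 then 'X * cauchy_poly k' - (power_sum k')%:P + 'X^k' else 'X.

Fixpoint cauchy2_poly k : {poly R} :=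
  if k is k'.+1 then 'X * cauchy2_poly k' + cauchy_poly k' else 0.

Lemma size_coef_cauchy_poly k :
  (size (cauchy_poly k) <= k.+2)%N /\ (cauchy_poly k)`_k.+1 = 1.
Proof.
elim: k => [|k [le_size lead]] /=; first by rewrite size_polyX coefX.
split.
  rewrite -addrA; apply: leq_trans (size_polyD _ _) _; rewrite geq_max; apply/andP; split.
    by rewrite mulrC; apply: leq_trans (size_polyMleq _ _) _; rewrite size_polyX addnC.
  apply: leq_trans (size_polyD _ _) _; rewrite geq_max size_polyXn size_polyN size_polyC.
  by case: (_ != 0); rewrite /= ?ltnS ?leqW.
rewrite !coefD coefN coefC coefXn mulrC coefMX /= lead.
by rewrite (_ : (k.+2 == k) = false) ?subr0 ?addr0 // gtn_eqF.
Qed.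

Lemma size_coef_cauchy2_poly k :
  (size (cauchy2_poly k) <= k.+1)%N /\ (cauchy2_poly k)`_k = k%:R.
Proof.
elim: k => [|k [le_size lead]] /=; first by rewrite size_poly0 coef0.
have [le_size' lead'] := size_coef_cauchy_poly k.
split; last by rewrite coefD mulrC coefMX /= lead lead' -natr1.
apply: leq_trans (size_polyD _ _) _; rewrite geq_max le_size' andbT.
by rewrite mulrC; apply: leq_trans (size_polyMleq _ _) _; rewrite size_polyX addnC.
Qed.

Hypotheses (z_inj : injective z) (z_stieltjes : stieltjes_relation z).

Let z_sub_neq0 i l : l != i -> z i - z l != 0.
Proof. by move=> li; rewrite subr_eq0; apply: contra li => /eqP/z_inj->. Qed.

Lemma horner_cauchy_poly k i :
  (cauchy_poly k).[z i] = \sum_(l | l != i) z l ^+ k / (z i - z l).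
Proof.
elim: k => [|k IH] /=.
  by rewrite hornerX -[LHS]z_stieltjes; apply: eq_bigr => l _; rewrite mul1r.
rewrite !hornerE IH [power_sum k](bigD1 i) //= mulr_sumr.
have -> : \sum_(l | l != i) z l ^+ k.+1 / (z i - z l) =
          \sum_(l | l != i) (z i * (z l ^+ k / (z i - z l)) - z l ^+ k).
  by apply: eq_bigr => l li; have ne := z_sub_neq0 li; rewrite exprS; field.
by rewrite sumrB; ring.
Qed.

Lemma horner_cauchy2_poly k i :
  (cauchy2_poly k).[z i] = \sum_(l | l != i) (z i - z l) ^- 2 * (z i ^+ k - z l ^+ k).
Proof.
elim: k => [|k IH] /=; first by rewrite horner0 big1 // => l _; rewrite subrr mulr0.
rewrite !hornerE IH horner_cauchy_poly mulr_sumr -big_split /=.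
by apply: eq_bigr => l li; have ne := z_sub_neq0 li; rewrite !exprS; field.
Qed.

End CauchySums.

Definition cauchy2_mx (R : fieldType) N (z : 'I_N -> R) : 'M[R]_N :=
  \matrix_(m, k) (cauchy2_poly z k)`_m.

Lemma det_add1_cauchy2_mx (R : fieldType) N (z : 'I_N -> R) :
  \det (1%:M + cauchy2_mx z) = N`!%:R.
Proof.
rewrite -det_tr det_trig; last first.
  apply/is_trig_mxP => i j lt_ij; rewrite !mxE -val_eqE /= (gtn_eqF lt_ij) add0r.
  have [le_size _] := size_coef_cauchy2_poly z i.
  by rewrite nth_default // (leq_trans le_size lt_ij).
rewrite fact_prod big_add1 big_mkord natr_prod; apply: eq_bigr => i _.
have [_ lead] := size_coef_cauchy2_poly z i.
by rewrite !mxE eqxx lead -natr1 addrC.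
Qed.

Lemma det_trVandermonde_neq0 (R : idomainType) N (z : 'I_N -> R) :
  injective z -> \det (Vandermonde N (\row_i z i))^T != 0.
Proof.
move=> z_inj; rewrite det_tr det_Vandermonde.
apply/prodf_neq0 => i _; apply/prodf_neq0 => j lt_ij; rewrite !mxE subr_eq0.
by apply: contraTneq lt_ij => /z_inj->; rewrite ltnn.
Qed.

Section StieltjesDeterminant.
Variables (R : realType) (N : nat) (z : 'I_N -> R).
Hypotheses (z_inj : injective z) (z_stieltjes : stieltjes_relation z).

Let V := (Vandermonde N (\row_i z i))^T.

Lemma Smat_mulmx_trVandermonde : Smat z *m V = V *m (1%:M + cauchy2_mx z).
Proof.
apply/matrixP => i k; rewrite mulmxDr mulmx1 !mxE.
have -> : \sum_j V i j * cauchy2_mx z j k = (cauchy2_poly z k).[z i].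
  rewrite (@horner_coef_wide _ N); last first.
    by apply: leq_trans (size_coef_cauchy2_poly z k).1 _.
  by apply: eq_bigr => j _; rewrite !mxE mulrC.
rewrite horner_cauchy2_poly // (bigD1 i) //= !mxE eqxx mulrDl mul1r big_distrl /=.
rewrite -addrA; congr (_ + _); rewrite -big_split /=; apply: eq_bigr => j ji.
by rewrite !mxE eq_sym (negPf ji); ring.
Qed.

Lemma det_Smat_stieltjes : \det (Smat z) = N`!%:R.
Proof.
have := congr1 determinant Smat_mulmx_trVandermonde.
rewrite !det_mulmx mulrC det_add1_cauchy2_mx.
by move/(mulfI (det_trVandermonde_neq0 z_inj)).
Qed.

End StieltjesDeterminant.

Theorem corollary2p3 (R : realType) (N : nat) (z : 'I_N -> R)
  (hdec : forall i j : 'I_N, (i < j)%N -> z j < z i)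
  (hzeros : forall x : R, root (hermite R N) x <-> exists i : 'I_N, x = z i) :
  \det (Smat z) = (N`!)%:R.
Proof.
have z_inj : injective z.
  move=> i j zij; apply: val_inj.
  by case: (ltngtP i j) => // /hdec; rewrite zij ltxx.
apply: det_Smat_stieltjes => //; apply: hermite_roots_stieltjes => // [|i].
  by rewrite pnatr_eq0.
by apply/hzeros; exists i.
Qed.
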